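(* Let $A\subset M$ and $f:M\to\mathbb{R}$ be such that all quantities below are finite. Then \[ 2\inf_{x\in A}\big[f(x)+W(x)\big]-2W(O_1)-h_1\ \ge\ \min_{j\in L}R^{(2)}_j, \] where $R^{(2)}_1=2\inf_{x\in A}[f(x)+V(O_1,x)]-h_1$ and, for $j\in L\setminus\{1\}$, $R^{(2)}_j=2\inf_{x\in A}[f(x)+V(O_j,x)]+W(O_j)-2W(O_1)+W(O_1\cup O_j)$.
   Context: $V:M\times M\to[0,\infty)$ is the Freidlin–Wentzell quasipotential of a small-noise diffusion on a compact manifold $M$: $V(x,y)=\inf\{I_T(\phi):\phi(0)=x,\phi(T)=y,T<\infty\}$ where $I_T(\phi)=\int_0^T\frac12\langle\dot\phi_t-b(\phi_t),[\sigma(\phi_t)\sigma(\phi_t)^T]^{-1}(\dot\phi_t-b(\phi_t))\rangle dt$. $O_1,\dots,O_l$ ($l\ge2$) are the equilibrium points, $L=\{1,\dots,l\}$. Graphs: for $W\subset L$, a $W$-graph on $L$ is a set of arrows $i\to j$ ($i\in L\setminus W$, $j\in L$, $j\ne i$) such that every $i\in L\setminus W$ is the initial point of exactly one arrow and from every $i\in L\setminus W$ a sequence of arrows leads into $W$; $G(W)$ is the set of $W$-graphs, $G(j)=G(\{j\})$, $G(i,j)=G(\{i,j\})$. $W(O_j)=\min_{g\in G(j)}\sum_{(m\to n)\in g}V(O_m,O_n)$, $W(O_1\cup O_j)=\min_{g\in G(1,j)}\sum_{(m\to n)\in g}V(O_m,O_n)$ for $j\ne1$, $W(x)=\min_{j\in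 L}[W(O_j)+V(O_j,x)]$, and $h_1=\min_{\ell\in L\setminus\{1\}}V(O_1,O_\ell)$. *)

From mathcomp Require Import all_boot.
From Stdlib Require Import Reals.

Set Implicit Arguments.
Unset Strict Implicit.
Unset Printing Implicit Defensive.

Local Open Scope R_scope.

Section QP.
Variables (M : Type) (L : finType) (V : M -> M -> R) (O : L -> M).

(* Minimum of F over the finite collective predicate P (0 if P is empty;
   only used for nonempty P). *)
Definition fmin (T : finType) (P : pred T) (F : T -> R) : R :=
  match [pick x in P] with
  | Some x0 => \big[Rmin/F x0]_(x in P) F x
  | None => 0
  end.

(* A W-graph on L: g encodes the arrows i -> g i for i \notin W (values of
   g on W are irrelevant); every i \notin W has exactly one arrow, no arrow
   is a loop, and from every i \notin W a sequence of arrows leads into W. *)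
Definition is_Wgraph (W : {set L}) (g : {ffun L -> L}) : bool :=
  [forall i, (i \notin W) ==>
     ((g i != i) && [exists w in W, connect (frel g) i w])].

Definition Wgraphs (W : {set L}) : {set {ffun L -> L}} :=
  [set g | is_Wgraph W g].

Definition gcost (W : {set L}) (g : {ffun L -> L}) : R :=
  \big[Rplus/0]_(i | i \notin W) V (O i) (O (g i)).

Definition WO (j : L) : R := fmin (mem (Wgraphs [set j])) (gcost [set j]).

Definition WO2 (i j : L) : R :=
  fmin (mem (Wgraphs [set i; j])) (gcost [set i; j]).

Definition Wx (x : M) : R := fmin predT (fun j => WO j + V (O j) x).

Definition h1 (one : L) : R := fmin (predC1 one) (fun l => V (O one) (O l)).

End QP.

Definition is_inf (S : R -> Prop) (m : R) : Prop :=
  (forall y, S y -> m <= y) /\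
  (forall m', (forall y, S y -> m' <= y) -> m' <= m).

(* Take x in A and a state j realising W(x) = W(O_j) + V(O_j, x).  If j = 1,
   the left-hand side at x is exactly the quantity of R^(2)_1.  If j <> 1, take
   an optimal {j}-graph g: removing its arrow 1 -> g(1), which costs at least
   h_1, leaves a {1, j}-graph, so W(O_j) >= W(O_1 u O_j) + h_1, and this turns
   the left-hand side at x into at least the quantity of R^(2)_j.  Passing to
   the infimum over x in A gives the claim. *)
From HB Require Import structures.
From mathcomp Require Import all_boot.
From Stdlib Require Import Reals Lra.

Set Implicit Arguments.
Unset Strict Implicit.
Unset Printing Implicit Defensive.

Local Open Scope R_scope.

HB.instance Definition _ := Monoid.isComLaw.Build R 0 Rplus
  (fun x y z => esym (Rplus_assoc x y z)) Rplus_comm Rplus_0_l.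

Lemma big_Rmin_le (T : eqType) (r : seq T) (P : pred T) (F : T -> R) z x :
  x \in r -> P x -> \big[Rmin/z]_(i <- r | P i) F i <= F x.
Proof.
elim: r => [|a r IHr] //; rewrite inE big_cons => /orP[/eqP-> -> | xr Px].
  exact: Rmin_l.
case: ifP => _; last exact: IHr.
exact: Rle_trans (Rmin_r _ _) (IHr xr Px).
Qed.

Section FiniteMin.
Variables (T : finType) (P : pred T) (F : T -> R).

Lemma fmin_le x : x \in P -> fmin P F <= F x.
Proof.
move=> Px; rewrite /fmin; case: pickP => [x0 _|P0]; last by rewrite P0 in Px.
exact: big_Rmin_le (mem_index_enum x) Px.
Qed.

Lemma fmin_attained x : x \in P -> exists2 y, y \in P & fmin P F = F y.
Proof.
move=> Px; rewrite /fmin; case: pickP => [x0 Px0|P0]; last by rewrite P0 in Px.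
elim/big_ind: _ => [|u v Hu Hv|y Py]; first by exists x0.
- by rewrite /Rmin; case: Rle_dec.
- by exists y.
Qed.

End FiniteMin.

Section Graphs.
Variables (M : Type) (L : finType) (V : M -> M -> R) (O : L -> M).

Lemma Wgraph_noloop (W : {set L}) (g : {ffun L -> L}) (i : L) :
  g \in Wgraphs W -> i \notin W -> g i != i.
Proof. by rewrite inE => /forallP/(_ i)/implyP Hg /Hg/andP[]. Qed.

Lemma Wgraphs_subset (W W' : {set L}) :
  W \subset W' -> Wgraphs W \subset Wgraphs W'.
Proof.
move=> sWW'; apply/subsetP => g; rewrite !inE => /forallP Hg.
apply/forallP => i; apply/implyP => iW'.
have iW : i \notin W by apply: contra iW'; apply: (subsetP sWW').
have /andP[-> /existsP[w /andP[wW iw]]] := implyP (Hg i) iW.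
by apply/existsP; exists w; rewrite (subsetP sWW').
Qed.

Lemma const_Wgraph (j : L) : [ffun=> j] \in Wgraphs [set j].
Proof.
rewrite inE; apply/forallP => i; apply/implyP; rewrite in_set1 ffunE => ij.
rewrite eq_sym ij; apply/existsP; exists j; rewrite in_set1 eqxx.
by apply: connect1; rewrite /= ffunE.
Qed.

Lemma gcost_setU1 (W : {set L}) (g : {ffun L -> L}) (i : L) :
  i \notin W -> gcost V O W g = V (O i) (O (g i)) + gcost V O (i |: W) g.
Proof.
move=> iW; rewrite /gcost (bigD1 i) //; congr (_ + _).
by apply: eq_bigl => k; rewrite in_setU1 negb_or andbC.
Qed.

Lemma WO2_add_h1_le_WO (one j : L) :
  j != one -> WO2 V O one j + h1 V O one <= WO V O j.
Proof.
move=> jn1.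
rewrite /WO; have [g gG ->] := fmin_attained (gcost V O [set j]) (const_Wgraph j).
have one_notin_j : one \notin [set j] by rewrite in_set1 eq_sym.
have gG2 : g \in Wgraphs [set one; j].
  by apply: subsetP gG; apply: Wgraphs_subset; rewrite subsetUr.
have h1_le : h1 V O one <= V (O one) (O (g one)).
  by apply: fmin_le; rewrite inE /= (Wgraph_noloop gG one_notin_j).
have WO2_le :=
  @fmin_le _ (mem (Wgraphs [set one; j])) (gcost V O [set one; j]) _ gG2.
rewrite (gcost_setU1 g one_notin_j) /WO2 in WO2_le *.
lra.
Qed.

End Graphs.

Section Bound.
Variables (M : Type) (L : finType) (one : L) (V : M -> M -> R) (O : L -> M).
Variable infV : L -> R.

Definition R2 (j : L) : R :=
  if j == one then 2 * infV one - h1 V O one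
  else 2 * infV j + WO V O j - 2 * WO V O one + WO2 V O one j.

Lemma fmin_R2_le_at (fx : R) (x : M) :
  (forall j, infV j <= fx + V (O j) x) ->
  fmin predT R2 <= 2 * (fx + Wx V O x) - 2 * WO V O one - h1 V O one.
Proof.
move=> infV_le.
rewrite /Wx.
have [j _ ->] :=
  fmin_attained (fun j => WO V O j + V (O j) x) (isT : one \in predT).
have R2_le := fmin_le R2 (isT : j \in predT).
move: R2_le (infV_le j); rewrite /R2; case: eqP => [-> | /eqP jn1]; first lra.
by have := WO2_add_h1_le_WO V O jn1; lra.
Qed.

End Bound.

Theorem lemma8p3 (M : Type) (L : finType) (one : L)
  (V : M -> M -> R) (O : L -> M) (A : M -> Prop) (f : M -> R)
  (infW : R) (infV : L -> R) :
  leq 2 #|L| ->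
  (forall x y, 0 <= V x y) ->
  injective O ->
  is_inf (fun y => exists x, A x /\ y = f x + Wx V O x) infW ->
  (forall j, is_inf (fun y => exists x, A x /\ y = f x + V (O j) x) (infV j)) ->
  2 * infW - 2 * WO V O one - h1 V O one >=
  fmin predT (fun j =>
    if j == one then 2 * infV one - h1 V O one
    else 2 * infV j + WO V O j - 2 * WO V O one + WO2 V O one j).
Proof.
move=> _ _ _ [_ infW_glb] infV_inf.
set m := fmin _ _.
suff : (m + 2 * WO V O one + h1 V O one) / 2 <= infW by lra.
apply: infW_glb => _ [x [Ax ->]].
have infV_le j : infV j <= f x + V (O j) x by apply: (proj1 (infV_inf j)); exists x.
have := fmin_R2_le_at one infV_le; rewrite -/m; lra.
Qed.
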